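(* Let $\tau$ be a signature and $\sigma$ a generalized dependency (GD) over $\tau$. Then $\sigma$ is preserved under globally-homomorphic preimages, i.e. for all $\tau$-structures $\mathcal{A},\mathcal{B}$, if $\mathcal{A}\Rightarrow\mathcal{B}$ and $\mathcal{B}\models\sigma$ then $\mathcal{A}\models\sigma$. In particular the same holds when $\mathcal{A},\mathcal{B}$ range only over finite structures.
   Context: Signatures are relational: a set of constant symbols and relation symbols with arities; structures have nonempty domains. Atomic formulas include equalities $t_1=t_2$ and relational atoms $R(\vec t)$. A GD is a sentence of the form $\forall\vec{x}(\phi(\vec{x})\rightarrow\exists\vec{y}(\psi_1(\vec{x},\vec{y})\vee\cdots\vee\psi_n(\vec{x},\vec{y})))$ with $n\ge 0$ and $\phi,\psi_1,\dots,\psi_n$ conjunctions of atomic formulas (for $n=0$ the head is $\bot$). For a structure $\mathcal{A}$ and $a_1,\dots,a_k\in A$, $(\mathcal{A},a_1,\dots,a_k)$ is the expansion interpreting fresh constant symbols $c_1,\dots,c_k$ as $a_1,\dots,a_k$. A homomorphism $\mathcal{A}\to\mathcal{B}$ is a map $h:A\to B$ preserving constants and relations ($h(R^{\mathcal A})\subseteq R^{\mathcal B}$); $\mathcal{A}\rightleftarrows\mathcal{B}$ means homomorphisms exist in both directions. $\mathcal{A}\Rightarrow\mathcal{B}$ ($\mathcal{A}$ is globally homomorphic to $\mathcal{B}$) means there is a function $\pi$ mapping every finite tuple $\vec a$ of elements of $A$ to a tuple $\pi(\vec a)$ of elements of $B$ of the same length with $(\mathcal{A},\vec{a})\rightleftarrows(\mathcal{B},\pi(\vec{a}))$.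 *)

From mathcomp Require Import all_boot.
From Stdlib Require Lists.List.

Set Implicit Arguments.
Unset Strict Implicit.
Unset Printing Implicit Defensive.

Record signature := Signature {
  const_sym : Type;
  rel_sym : Type;
  arity : rel_sym -> nat }.

Record structure (sg : signature) := Structure {
  dom :> Type;
  dom_ne : inhabited dom;
  cst : const_sym sg -> dom;
  rel : forall R : rel_sym sg, ('I_(arity R) -> dom) -> Prop }.
Arguments dom {sg} s.
Arguments cst {sg} s c.
Arguments rel {sg} s R t.
Arguments dom_ne {sg} s.

Definition finite_structure (sg : signature) (A : structure sg) : Prop :=
  exists l : list A, forall x : A, List.In x l.

Inductive term (sg : signature) (V : Type) : Type :=
  | TVar : V -> term sg V
  | TConst : const_sym sg -> term sg V.
Arguments TVar {sg V}.
Arguments TConst {sg V}.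

Inductive atom (sg : signature) (V : Type) : Type :=
  | AEq : term sg V -> term sg V -> atom sg V
  | ARel (R : rel_sym sg) : ('I_(arity R) -> term sg V) -> atom sg V.
Arguments AEq {sg V}.
Arguments ARel {sg V}.

Definition eval_term (sg : signature) (A : structure sg) V (v : V -> A) (t : term sg V) : A :=
  match t with TVar x => v x | TConst c => cst A c end.
Arguments eval_term {sg} A {V} v t.

Definition holds_atom (sg : signature) (A : structure sg) V (v : V -> A) (f : atom sg V) : Prop :=
  match f with
  | AEq t1 t2 => eval_term A v t1 = eval_term A v t2
  | ARel R ts => rel A R (fun i => eval_term A v (ts i))
  end.
Arguments holds_atom {sg} A {V} v f.

Fixpoint holds_conj (sg : signature) (A : structure sg) V (v : V -> A) (l : list (atom sg V)) : Prop :=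
  match l with
  | nil => True
  | cons f l' => holds_atom A v f /\ @holds_conj sg A V v l'
  end.
Arguments holds_conj {sg} A {V} v l.

Fixpoint holds_disj (sg : signature) (A : structure sg) V (v : V -> A) (l : list (list (atom sg V))) : Prop :=
  match l with
  | nil => False
  | cons c l' => holds_conj A v c \/ @holds_disj sg A V v l'
  end.
Arguments holds_disj {sg} A {V} v l.

(* A GD  forall x (phi(x) -> exists y (psi_1(x,y) \/ ... \/ psi_n(x,y))),
   with nx universal variables x and ny existential variables y. *)
Record GD (sg : signature) := MkGD {
  gd_nx : nat;
  gd_ny : nat;
  gd_body : list (atom sg 'I_gd_nx);
  gd_heads : list (list (atom sg ('I_gd_nx + 'I_gd_ny)%type)) }.

Definition satisfies sg (A : structure sg) (s : GD sg) : Prop :=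
  forall a : 'I_(gd_nx s) -> A,
    holds_conj A a (gd_body s) ->
    exists b : 'I_(gd_ny s) -> A,
      holds_disj A (fun z => match z with inl i => a i | inr j => b j end) (gd_heads s).

Definition expand_sig (sg : signature) (k : nat) : signature :=
  Signature (const_sym sg + 'I_k)%type (@arity sg).

Definition expand sg (A : structure sg) (k : nat) (a : 'I_k -> A) : structure (expand_sig sg k) :=
  @Structure (expand_sig sg k) A (dom_ne A)
    (fun c => match c with inl c0 => cst A c0 | inr i => a i end)
    (rel A).
Arguments expand {sg} A {k} a.

Definition hom_exists sg (A B : structure sg) : Prop :=
  exists h : A -> B,
    (forall c, h (cst A c) = cst B c) /\
    (forall (R : rel_sym sg) (t : 'I_(arity R) -> A), rel A R t -> rel B R (fun i => h (t i))).
Arguments hom_exists {sg} A B.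

Definition hom_equiv sg (A B : structure sg) : Prop := hom_exists A B /\ hom_exists B A.
Arguments hom_equiv {sg} A B.

Definition glob_hom sg (A B : structure sg) : Prop :=
  exists pi : forall k : nat, ('I_k -> A) -> ('I_k -> B),
    forall (k : nat) (a : 'I_k -> A), hom_equiv (expand A a) (expand B (pi k a)).

(* If [a] satisfies the
   body of the GD in [A], a homomorphism [(A, a) -> (B, pi a)] transfers the body to
   [B]; [B] supplies witnesses [y] for some head, and a homomorphism
   [(B, pi a) -> (A, a)] carries that head back to [A] with the universal variables
   still sent to [a]. *)
From Stdlib Require Import FunctionalExtensionality.
From Pilot Require Import Defs.
From mathcomp Require Import all_boot.

Set Implicit Arguments.
Unset Strict Implicit.
Unset Printing Implicit Defensive.

Section HomPreservesPositiveFormulas.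

Variables (sg : signature) (A B : structure sg) (h : A -> B).
Hypothesis hom_cst : forall c, h (cst A c) = cst B c.
Hypothesis hom_rel :
  forall R (t : 'I_(arity R) -> A), Defs.rel A R t -> Defs.rel B R (fun i => h (t i)).
Variables (V : Type) (v : V -> A) (w : V -> B).
Hypothesis hom_val : h \o v =1 w.

Lemma eval_term_hom (t : term sg V) : h (eval_term A v t) = eval_term B w t.
Proof. by case: t => [x|c] /=; [exact: hom_val | exact: hom_cst]. Qed.

Lemma holds_atom_hom (f : atom sg V) : holds_atom A v f -> holds_atom B w f.
Proof.
case: f => [t1 t2|R ts] /=; first by move=> eq_t; rewrite -!eval_term_hom eq_t.
move=> /hom_rel; congr (Defs.rel B R _).
by apply: functional_extensionality => i; rewrite eval_term_hom.
Qed.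

Lemma holds_conj_hom (l : list (atom sg V)) : holds_conj A v l -> holds_conj B w l.
Proof. by elim: l => [|f l IHl] //= [/holds_atom_hom ? /IHl]. Qed.

Lemma holds_disj_hom (l : list (list (atom sg V))) : holds_disj A v l -> holds_disj B w l.
Proof. by elim: l => [|c l IHl] //= [/holds_conj_hom ?|/IHl ?]; [left | right]. Qed.

End HomPreservesPositiveFormulas.

Lemma hom_expand sg (A B : structure sg) k (a : 'I_k -> A) (b : 'I_k -> B) :
  hom_exists (expand A a) (expand B b) ->
  exists h : A -> B,
    [/\ forall c, h (cst A c) = cst B c,
        forall R (t : 'I_(arity R) -> A), Defs.rel A R t -> Defs.rel B R (fun i => h (t i))
      & h \o a =1 b].
Proof.
case=> h [hom_cst hom_rel]; exists h.
by split=> [c|//|i]; [exact: (hom_cst (inl c)) | exact: (hom_cst (inr i))].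
Qed.

Lemma glob_hom_satisfies sg (s : GD sg) (A B : structure sg) :
  glob_hom A B -> satisfies B s -> satisfies A s.
Proof.
move=> [pi hom_pi] satB a body_a.
have [/hom_expand [h [h_cst h_rel h_a]] /hom_expand [g [g_cst g_rel g_pi]]] := hom_pi _ a.
have [y head_y] := satB _ (holds_conj_hom h_cst h_rel h_a body_a).
exists (g \o y); apply: (holds_disj_hom g_cst g_rel _ head_y).
by case=> [i|j] /=; [exact: g_pi|].
Qed.

Theorem proposition1 (sg : signature) (s : GD sg) :
  (forall A B : structure sg, glob_hom A B -> satisfies B s -> satisfies A s) /\
  (forall A B : structure sg, finite_structure A -> finite_structure B ->
     glob_hom A B -> satisfies B s -> satisfies A s).
Proof.
split=> [A B|A B _ _]; exact: glob_hom_satisfies.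
Qed.
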